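(* Let $M$ be a quasianalytic intersectable weight sequence. Then: (i) $n_k^{1/k}\to\infty$ for all $N\in\mathcal{L}(M)$, where $n_k=N_k/k!$. (ii) If $M$ has moderate growth, then for every $N\in\mathcal{L}(M)$ there exists $N'\in\mathcal{L}(M)$ such that $\mathrm{mg}(N',N)<\infty$.
   Context: A weight sequence is a sequence $M=(M_k)_{k\ge0}$ of positive reals with $M_k=\mu_1\cdots\mu_k$, $M_0=1$, where $(\mu_k)$ is positive and increasing with $\mu_0=1$, and $M_k^{1/k}\to\infty$. $M$ is non-quasianalytic if $\sum_{k\ge1}1/\mu_k<\infty$, quasianalytic otherwise; it has moderate growth if $\exists C>0\ \forall j,k: M_{j+k}\le C^{j+k}M_jM_k$. $\Lambda^{\{M\}}:=\{(c_k)\in\mathbb{C}^{\mathbb{N}}:\exists\rho>0,\ \sup_k|c_k|/(\rho^kM_k)<\infty\}$; $\mathcal{L}(M)$ is the set of all non-quasianalytic weight sequences $N$ with $N_k\ge M_k$ for all $k$ and $(N_k/k!)_k$ log-convex. A quasianalytic weight sequence $M$ is intersectable if $\Lambda^{\{M\}}=\bigcap_{N\in\mathcal{L}(M)}\Lambda^{\{N\}}$. $\mathrm{mg}(M,N):=\sup_{j,k\ge0,j+k\ge1}(M_{j+k}/(N_jN_k))^{1/(j+k)}\in(0,\infty]$. *)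

From Stdlib Require Import Reals Arith.
From Coquelicot Require Export Coquelicot.
Open Scope R_scope.

Definition weight_seq (M : nat -> R) : Prop :=
  exists mu : nat -> R,
    mu 0%nat = 1 /\
    (forall k, 0 < mu k) /\
    (forall k, mu k <= mu (S k)) /\
    M 0%nat = 1 /\
    (forall k, M (S k) = M k * mu (S k)) /\
    is_lim_seq (fun k => Rpower (M k) (/ INR k)) p_infty.

(* mu_{k+1} = M_{k+1} / M_k, so 1/mu_{k+1} = M_k / M_{k+1};
   non-quasianalytic: sum_{k>=1} 1/mu_k < oo (positive terms). *)
Definition nonquasianalytic (M : nat -> R) : Prop :=
  ex_series (fun k => M k / M (S k)).

Definition quasianalytic (M : nat -> R) : Prop := ~ nonquasianalytic M.

Definition moderate_growth (M : nat -> R) : Prop :=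
  exists C, 0 < C /\ forall j k : nat, M (j + k)%nat <= C ^ (j + k) * M j * M k.

Definition Lambda (M : nat -> R) (c : nat -> C) : Prop :=
  exists rho, 0 < rho /\ exists B, forall k, Cmod (c k) / (rho ^ k * M k) <= B.

Definition log_convex (a : nat -> R) : Prop :=
  forall k, a (S k) ^ 2 <= a k * a (S (S k)).

Definition in_LM (M N : nat -> R) : Prop :=
  weight_seq N /\ nonquasianalytic N /\ (forall k, M k <= N k) /\
  log_convex (fun k => N k / INR (Factorial.fact k)).

Definition intersectable (M : nat -> R) : Prop :=
  quasianalytic M /\
  forall c : nat -> C, Lambda M c <-> (forall N, in_LM M N -> Lambda N c).

Definition mg (M N : nat -> R) : Rbar :=
  Lub_Rbar (fun x => exists j k : nat, (1 <= j + k)%nat /\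
     x = Rpower (M (j + k)%nat / (N j * N k)) (/ INR (j + k))).

(* Write n_k = N_k / k!.  For (i), n_(k+1) / n_k = mu_(k+1) / (k+1), and an increasing
   sequence mu with summable reciprocals grows superlinearly, so the ratios of n tend to
   infinity and hence so does n_k^(1/k).
   For (ii), take a moderate growth constant C >= 1 and
   N'_m = m! C^m n_(floor(m/2)) n_(ceil(m/2)).  Moderate growth and a! b! <= (a+b)! give
   M <= N'; N'_m / m! is log-convex as a product of log-convex sequences; the ratios
   N'_k / N'_(k+1) are dominated by N_a / N_(a+1) at a = floor(k/2), so N' is
   non-quasianalytic; and log-convexity of n with (j+k)! <= 2^(j+k) j! k! gives
   N'_(j+k) <= (2C)^(j+k) N_j N_k, i.e. mg(N', N) <= 2C. *)

From Stdlib Require Import Reals Arith Lia Lra.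
From Coquelicot Require Import Coquelicot.
Open Scope R_scope.

Lemma weight_seq_pos N : weight_seq N -> forall k, 0 < N k.
Proof.
  intros [mu [_ [Hmu [_ [HN0 [HS _]]]]]] k.
  induction k as [|k IHk]; [rewrite HN0; lra|].
  rewrite HS; apply Rmult_lt_0_compat; auto.
Qed.

Lemma weight_seq_0 N : weight_seq N -> N 0%nat = 1.
Proof. intros [mu [_ [_ [_ [HN0 _]]]]]; exact HN0. Qed.

Lemma weight_seq_1_ge N : weight_seq N -> 1 <= N 1%nat.
Proof.
  intros [mu [Hmu0 [_ [Hincr [HN0 [HS _]]]]]].
  rewrite HS, HN0, Rmult_1_l, <- Hmu0; apply Hincr.
Qed.

Lemma sum_n_m_le_loc (a b : nat -> R) n m :
  (forall k, (n <= k <= m)%nat -> a k <= b k) -> sum_n_m a n m <= sum_n_m b n m.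
Proof.
  intros Hab.
  rewrite (sum_n_m_ext_loc a (fun k => Rmin (a k) (b k))).
  - apply sum_n_m_le; intros k; apply Rmin_r.
  - intros k Hk; rewrite Rmin_left; auto.
Qed.

Lemma increasing_summable_inv_superlinear (nu : nat -> R) :
  (forall k, 0 < nu k) -> (forall k, nu k <= nu (S k)) ->
  ex_series (fun k => / nu (S k)) -> is_lim_seq (fun k => nu k / INR k) p_infty.
Proof.
  intros Hpos Hincr Hsum.
  assert (Hmono : forall p q, (p <= q)%nat -> nu p <= nu q).
  { induction 1 as [|q _ IH]; [lra | specialize (Hincr q); lra]. }
  apply is_lim_seq_p_infty_Reals; intros L.
  set (L' := Rabs L + 1).
  assert (HL' : 0 < L') by (pose proof (Rabs_pos L); unfold L'; lra).
  assert (He : 0 < / (2 * L')) by (apply Rinv_0_lt_compat; lra).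
  destruct (Cauchy_ex_series _ Hsum (mkposreal _ He)) as [K HK]; simpl in HK.
  exists (S (2 * K)); intros [|j] Hj; [lia|].
  (* the tail from K to j has at least (S j)/2 terms, each at least / nu (S j) *)
  assert (Htail : INR (S j - K) * / nu (S j) < / (2 * L')).
  { rewrite <- sum_n_m_const.
    eapply Rle_lt_trans; [|apply (HK K j); lia].
    eapply Rle_trans; [|apply Rle_abs].
    apply sum_n_m_le_loc; intros k Hk.
    apply Rinv_le_contravar; auto; apply Hmono; lia. }
  assert (Hcount : INR (S j) <= 2 * INR (S j - K)).
  { replace 2 with (INR 2) by reflexivity. rewrite <- mult_INR; apply le_INR; lia. }
  assert (Hj0 : 0 < INR (S j)) by (apply lt_0_INR; lia).
  pose proof (Hpos (S j)).
  assert (Hlin : 2 * L' * INR (S j - K) < nu (S j)).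
  { apply (Rmult_lt_compat_l (2 * L' * nu (S j))) in Htail; [|nra].
    replace (2 * L' * nu (S j) * (INR (S j - K) * / nu (S j)))
      with (2 * L' * INR (S j - K)) in Htail by (field; lra).
    replace (2 * L' * nu (S j) * / (2 * L')) with (nu (S j)) in Htail by (field; lra).
    exact Htail. }
  apply Rlt_div_r; [lra|].
  pose proof (Rle_abs L); unfold L' in *; nra.
Qed.

Lemma is_lim_seq_div_INR_of_increments (b : nat -> R) :
  is_lim_seq (fun k => b (S k) - b k) p_infty -> is_lim_seq (fun k => b k / INR k) p_infty.
Proof.
  rewrite !is_lim_seq_p_infty_Reals; intros Hinc L.
  pose proof (Rle_abs L); pose proof (Rabs_pos L).
  set (D := 2 * Rabs L + 2).
  destruct (Hinc D) as [K HK].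
  assert (Hlin : forall t, b K + D * INR t <= b (K + t)%nat).
  { induction t as [|t IHt]; [rewrite Nat.add_0_r; simpl; lra|].
    rewrite Nat.add_succ_r, S_INR; specialize (HK (K + t)%nat ltac:(lia)); lra. }
  destruct (INR_unbounded (D * INR K + Rabs (b K))) as [k0 Hk0].
  exists (max k0 K); intros k Hk.
  specialize (Hlin (k - K)%nat); replace (K + (k - K))%nat with k in Hlin by lia.
  rewrite minus_INR in Hlin by lia.
  assert (Hk0k : INR k0 <= INR k) by (apply le_INR; lia).
  pose proof (pos_INR k0); pose proof (Rabs_pos (b K)); pose proof (Rle_abs (- b K)).
  rewrite Rabs_Ropp in *.
  assert (0 <= D * INR K) by (apply Rmult_le_pos; [unfold D; lra | apply pos_INR]).
  assert (0 <= (D - L - 1) * INR k) by (apply Rmult_le_pos; [unfold D; lra | apply pos_INR]).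
  apply Rlt_div_r; lra.
Qed.

Lemma root_lim_of_ratio_lim (a : nat -> R) :
  (forall k, 0 < a k) -> is_lim_seq (fun k => a (S k) / a k) p_infty ->
  is_lim_seq (fun k => Rpower (a k) (/ INR k)) p_infty.
Proof.
  intros Hpos Hratio.
  assert (Hlog : is_lim_seq (fun k => ln (a k) / INR k) p_infty).
  { apply is_lim_seq_div_INR_of_increments.
    eapply is_lim_seq_ext;
      [|apply (is_lim_comp_seq ln (fun k => a (S k) / a k) p_infty p_infty is_lim_ln_p); [|exact Hratio]].
    - intros k; apply ln_div; auto.
    - exists 0%nat; intros k _; discriminate. }
  apply is_lim_seq_le_p_loc with (2 := Hlog); exists 0%nat; intros k _.
  unfold Rpower, Rdiv; rewrite Rmult_comm.
  pose proof (exp_ineq1_le (/ INR k * ln (a k))); lra.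
Qed.

Lemma nonquasianalytic_root_lim N : weight_seq N -> nonquasianalytic N ->
  is_lim_seq (fun k => Rpower (N k / INR (fact k)) (/ INR k)) p_infty.
Proof.
  intros Hw Hnq.
  pose proof (weight_seq_pos N Hw) as HN.
  destruct Hw as [mu [_ [Hmu [Hincr [_ [HS _]]]]]].
  assert (Hsum : ex_series (fun k => / mu (S k))).
  { eapply ex_series_ext; [|exact Hnq]; intros k; simpl.
    rewrite HS; specialize (HN k); specialize (Hmu (S k)); field; lra. }
  apply root_lim_of_ratio_lim.
  - intros k; apply Rdiv_lt_0_compat; auto; apply INR_fact_lt_0.
  - pose proof (increasing_summable_inv_superlinear mu Hmu Hincr Hsum) as Hlim.
    apply is_lim_seq_incr_1 in Hlim; eapply is_lim_seq_ext; [|exact Hlim]; intros k; cbv beta.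
    rewrite HS, (fact_simpl k), mult_INR.
    pose proof (INR_fact_lt_0 k); pose proof (HN k); pose proof (Hmu (S k)).
    assert (0 < INR (S k)) by (apply lt_0_INR; lia).
    field; lra.
Qed.

Lemma fact_mul_le a b : (fact a * fact b <= fact (a + b))%nat.
Proof.
  induction b as [|b IHb]; [rewrite Nat.add_0_r; simpl; lia|].
  rewrite Nat.add_succ_r, !fact_simpl; nia.
Qed.

Lemma fact_add_le_pow2 j k : (fact (j + k) <= 2 ^ (j + k) * (fact j * fact k))%nat.
Proof.
  revert k; induction j as [|j IHj]; intros k.
  - pose proof (Nat.pow_nonzero 2 k); simpl; nia.
  - induction k as [|k IHk].
    + rewrite Nat.add_0_r; pose proof (Nat.pow_nonzero 2 (S j)); simpl (fact 0); nia.
    + (* Pascal's rule: (j+k+2)! = (j+1) (j+k+1)! + (k+1) (j+k+1)! *)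
      specialize (IHj (S k)); rewrite Nat.add_succ_r in IHj.
      replace (S j + S k)%nat with (S (S (j + k))) by lia.
      replace (S j + k)%nat with (S (j + k)) in IHk by lia.
      rewrite (fact_simpl (S (j + k))), (fact_simpl j), (fact_simpl k) in *.
      rewrite Nat.pow_succ_r'; nia.
Qed.

Lemma log_convex_mul (x y : nat -> R) :
  log_convex x -> log_convex y -> log_convex (fun k => x k * y k).
Proof.
  intros Hx Hy k.
  replace ((x (S k) * y (S k)) ^ 2) with (x (S k) ^ 2 * y (S k) ^ 2) by ring.
  replace (x k * y k * (x (S (S k)) * y (S (S k))))
    with ((x k * x (S (S k))) * (y k * y (S (S k)))) by ring.
  apply Rmult_le_compat; auto; apply pow2_ge_0.
Qed.

Lemma log_convex_pow (C : R) : log_convex (fun k => C ^ k).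
Proof. intros k; simpl; right; ring. Qed.

Lemma log_convex_fact : log_convex (fun k => INR (fact k)).
Proof.
  intros k; rewrite (fact_simpl (S k)), (fact_simpl k), !mult_INR, !S_INR.
  pose proof (INR_fact_lt_0 k); pose proof (pos_INR k); nra.
Qed.

Definition fact_normalized (N : nat -> R) (k : nat) : R := N k / INR (fact k).

Lemma log_convex_of_fact_normalized W : log_convex (fact_normalized W) -> log_convex W.
Proof.
  intros H k.
  pose proof (log_convex_mul _ _ log_convex_fact H k) as Hk; cbv beta in Hk.
  assert (E : forall m, INR (fact m) * fact_normalized W m = W m).
  { intros m; unfold fact_normalized; pose proof (INR_fact_lt_0 m); field; lra. }
  rewrite !E in Hk; exact Hk.
Qed.

Lemma log_convex_midpoint (x : nat -> R) :
  log_convex x -> log_convex (fun m => x (Nat.div2 m) * x (Nat.div2 (S m))).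
Proof.
  intros Hx k.
  assert (HSS : forall n, Nat.div2 (S (S n)) = S (Nat.div2 n)) by reflexivity.
  destruct (Nat.Even_or_Odd k) as [[a ->] | [a ->]].
  - rewrite !HSS, Nat.div2_double, Nat.div2_succ_double; right; ring.
  - replace (2 * a + 1)%nat with (S (2 * a)) by lia.
    rewrite !HSS, Nat.div2_double, Nat.div2_succ_double.
    replace ((x (S a) * x (S a)) ^ 2) with (x (S a) ^ 2 * x (S a) ^ 2) by ring.
    replace (x a * x (S a) * (x (S a) * x (S (S a))))
      with (x (S a) ^ 2 * (x a * x (S (S a)))) by ring.
    apply Rmult_le_compat_l; [apply pow2_ge_0 | apply Hx].
Qed.

Section LogConvexPositive.

Variable x : nat -> R.
Hypothesis x_pos : forall k, 0 < x k.
Hypothesis x_lc : log_convex x.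

Lemma log_convex_ratio_le k : x (S k) / x k <= x (S (S k)) / x (S k).
Proof.
  pose proof (x_pos k); pose proof (x_pos (S k)); pose proof (x_lc k).
  apply (Rmult_le_reg_r (x k * x (S k))); [nra|].
  replace (x (S k) / x k * (x k * x (S k))) with (x (S k) ^ 2) by (field; lra).
  replace (x (S (S k)) / x (S k) * (x k * x (S k))) with (x k * x (S (S k))) by (field; lra).
  assumption.
Qed.

Lemma log_convex_ratio_mono p q : (p <= q)%nat -> x (S p) / x p <= x (S q) / x q.
Proof.
  induction 1 as [|q _ IH]; [lra|].
  pose proof (log_convex_ratio_le q); lra.
Qed.

Lemma log_convex_shift j b t : (j <= b)%nat -> x (j + t)%nat * x b <= x j * x (b + t)%nat.
Proof.
  intros Hjb; induction t as [|t IHt]; [rewrite !Nat.add_0_r; lra|].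
  rewrite !Nat.add_succ_r.
  pose proof (log_convex_ratio_mono (j + t) (b + t) ltac:(lia)) as Hr.
  pose proof (x_pos (j + t)); pose proof (x_pos (b + t)); pose proof (x_pos j).
  set (r := x (S (j + t)) / x (j + t)%nat) in Hr.
  set (s := x (S (b + t)) / x (b + t)%nat) in Hr.
  replace (x (S (j + t)) * x b) with (x (j + t)%nat * x b * r) by (unfold r; field; lra).
  replace (x j * x (S (b + t))) with (x j * x (b + t)%nat * s) by (unfold s; field; lra).
  assert (0 <= r) by (left; apply Rdiv_lt_0_compat; auto).
  apply Rle_trans with (x j * x (b + t)%nat * r).
  - apply Rmult_le_compat_r; auto.
  - apply Rmult_le_compat_l; [nra | exact Hr].
Qed.

Lemma log_convex_pinch j a b k :
  (j <= a)%nat -> (a <= b)%nat -> (a + b = j + k)%nat -> x a * x b <= x j * x k.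
Proof.
  intros Hja Hab Hsum.
  pose proof (log_convex_shift j b (a - j) ltac:(lia)) as H.
  replace (j + (a - j))%nat with a in H by lia.
  replace (b + (a - j))%nat with k in H by lia.
  exact H.
Qed.

End LogConvexPositive.

Lemma div2_spec m : (2 * Nat.div2 m <= m <= 2 * Nat.div2 m + 1)%nat.
Proof. pose proof (Nat.div2_odd m); destruct (Nat.odd m); simpl in *; lia. Qed.

Lemma sum_n_nonneg_mono (a : nat -> R) : (forall k, 0 <= a k) ->
  forall m m', (m <= m')%nat -> sum_n a m <= sum_n a m'.
Proof.
  intros Ha m m'; induction 1 as [|m' _ IH]; [lra|].
  rewrite sum_Sn; specialize (Ha (S m')); unfold plus; simpl; lra.
Qed.

Lemma ex_series_div2 (q : nat -> R) : (forall k, 0 <= q k) -> ex_series q ->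
  ex_series (fun k => q (Nat.div2 k)).
Proof.
  intros Hq [l Hl].
  assert (Hdouble : forall m, sum_n (fun k => q (Nat.div2 k)) (S (2 * m)) = 2 * sum_n q m).
  { induction m as [|m IHm].
    - rewrite sum_Sn, !sum_O; unfold plus; simpl; lra.
    - replace (S (2 * S m)) with (S (S (S (2 * m)))) by lia.
      rewrite 2!sum_Sn, IHm, sum_Sn.
      change (Nat.div2 (S (S (S (2 * m))))) with (S (Nat.div2 (S (2 * m)))).
      change (Nat.div2 (S (S (2 * m)))) with (S (Nat.div2 (2 * m))).
      rewrite Nat.div2_succ_double, Nat.div2_double; unfold plus; simpl; lra. }
  assert (Hbound : forall m, sum_n q m <= l).
  { apply is_lim_seq_incr_compare; [exact Hl|].
    intros m; rewrite sum_Sn; specialize (Hq (S m)); unfold plus; simpl; lra. }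
  assert (Hlim : ex_finite_lim_seq (sum_n (fun k => q (Nat.div2 k)))).
  { apply ex_finite_lim_seq_incr with (2 * l).
    - intros m; apply sum_n_nonneg_mono; auto.
    - intros m; apply Rle_trans with (2 * sum_n q m); [|specialize (Hbound m); lra].
      rewrite <- Hdouble; apply sum_n_nonneg_mono; [auto | lia]. }
  destruct Hlim as [l' Hl']; exists l'; exact Hl'.
Qed.

Lemma weight_seq_of_log_convex M W :
  weight_seq M -> (forall k, M k <= W k) -> W 0%nat = 1 -> log_convex W -> weight_seq W.
Proof.
  intros HwM HMW HW0 Hlc.
  pose proof (weight_seq_pos M HwM) as HMpos.
  assert (HWpos : forall k, 0 < W k) by (intros k; specialize (HMpos k); specialize (HMW k); lra).
  exists (fun k => match k with 0%nat => 1 | S p => W (S p) / W p end).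
  split; [reflexivity|]; split; [|split; [|split; [|split]]].
  - intros [|k]; [lra | apply Rdiv_lt_0_compat; auto].
  - intros [|k].
    + rewrite HW0, Rdiv_1_r; pose proof (weight_seq_1_ge M HwM); specialize (HMW 1%nat); lra.
    + apply log_convex_ratio_le; auto.
  - exact HW0.
  - intros k; specialize (HWpos k); field; lra.
  - destruct HwM as [mu [_ [_ [_ [_ [_ Hlim]]]]]].
    apply is_lim_seq_le_p_loc with (2 := Hlim); exists 1%nat; intros k Hk.
    apply Rle_Rpower_l; [left; apply Rinv_0_lt_compat, lt_0_INR; lia | split; auto].
Qed.

Lemma mg_le_of_bound A B D : (forall k, 0 < A k) -> (forall k, 0 < B k) -> 0 < D ->
  (forall j k, A (j + k)%nat <= D ^ (j + k) * (B j * B k)) -> Rbar_le (mg A B) D.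
Proof.
  intros HA HB HD Hbound.
  apply (proj2 (Lub_Rbar_correct _)); intros x [j [k [Hjk ->]]]; simpl.
  set (m := (j + k)%nat) in *.
  assert (Hm : 0 < INR m) by (apply lt_0_INR; lia).
  pose proof (HB j); pose proof (HB k).
  assert (Hratio : A m / (B j * B k) <= D ^ m).
  { apply Rle_div_l; [nra | apply Hbound]. }
  apply Rle_trans with (Rpower (D ^ m) (/ INR m)).
  - apply Rle_Rpower_l; [left; apply Rinv_0_lt_compat; auto|].
    split; [apply Rdiv_lt_0_compat; [apply HA | nra] | exact Hratio].
  - rewrite <- Rpower_pow, Rpower_mult, Rinv_r, Rpower_1 by lra; lra.
Qed.

Definition midpoint_weight (C : R) (N : nat -> R) (m : nat) : R :=
  INR (fact m) * (C ^ m * (fact_normalized N (Nat.div2 m) * fact_normalized N (Nat.div2 (S m)))).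

Section MidpointWeight.

Variables (N : nat -> R) (C : R).
Hypothesis N_pos : forall k, 0 < N k.
Hypothesis C_pos : 0 < C.

Let n := fact_normalized N.

Lemma fact_normalized_pos k : 0 < n k.
Proof. apply Rdiv_lt_0_compat; [apply N_pos | apply INR_fact_lt_0]. Qed.

Lemma midpoint_weight_pos m : 0 < midpoint_weight C N m.
Proof.
  pose proof (fact_normalized_pos (Nat.div2 m)); pose proof (fact_normalized_pos (Nat.div2 (S m))).
  pose proof (INR_fact_lt_0 m); pose proof (pow_lt C m C_pos).
  unfold midpoint_weight; fold n; apply Rmult_lt_0_compat; auto.
  apply Rmult_lt_0_compat; auto; nra.
Qed.

Lemma fact_normalized_midpoint_weight m :
  fact_normalized (midpoint_weight C N) m = C ^ m * (n (Nat.div2 m) * n (Nat.div2 (S m))).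
Proof.
  change (midpoint_weight C N m / INR (fact m) = C ^ m * (n (Nat.div2 m) * n (Nat.div2 (S m)))).
  unfold midpoint_weight; fold n; pose proof (INR_fact_lt_0 m); field; lra.
Qed.

Lemma midpoint_weight_log_convex :
  log_convex n -> log_convex (fact_normalized (midpoint_weight C N)).
Proof.
  intros Hlc k; rewrite !fact_normalized_midpoint_weight.
  exact (log_convex_mul _ _ (log_convex_pow C) (log_convex_midpoint n Hlc) k).
Qed.

Lemma midpoint_weight_0 : N 0%nat = 1 -> midpoint_weight C N 0%nat = 1.
Proof. intros HN0; unfold midpoint_weight, fact_normalized; simpl; rewrite HN0; field. Qed.

Lemma midpoint_weight_above M : (forall k, 0 <= M k) -> (forall k, M k <= N k) ->
  (forall j k, M (j + k)%nat <= C ^ (j + k) * M j * M k) ->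
  forall m, M m <= midpoint_weight C N m.
Proof.
  intros HM HMN Hmg m.
  set (a := Nat.div2 m); set (b := Nat.div2 (S m)).
  assert (Hab : (a + b = m)%nat) by (pose proof (div2_spec m); pose proof (div2_spec (S m)); lia).
  pose proof (fact_mul_le a b) as Hfact; rewrite Hab in Hfact; apply le_INR in Hfact.
  rewrite mult_INR in Hfact.
  pose proof (fact_normalized_pos a); pose proof (fact_normalized_pos b).
  pose proof (pow_lt C m C_pos).
  rewrite <- Hab at 1; eapply Rle_trans; [apply Hmg|]; rewrite Hab.
  apply Rle_trans with (C ^ m * (N a * N b)).
  - rewrite Rmult_assoc; apply Rmult_le_compat_l; [lra|].
    apply Rmult_le_compat; auto.
  - replace (N a * N b) with (INR (fact a) * INR (fact b) * (n a * n b)).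
    + unfold midpoint_weight; fold n a b.
      pose proof (INR_fact_lt_0 a); pose proof (INR_fact_lt_0 b).
      replace (C ^ m * (INR (fact a) * INR (fact b) * (n a * n b)))
        with (INR (fact a) * INR (fact b) * (C ^ m * (n a * n b))) by ring.
      apply Rmult_le_compat_r; [|exact Hfact].
      apply Rmult_le_pos; [lra | left; apply Rmult_lt_0_compat; auto].
    + unfold n, fact_normalized; pose proof (INR_fact_lt_0 a); pose proof (INR_fact_lt_0 b).
      field; lra.
Qed.

Lemma midpoint_weight_nonquasianalytic :
  1 <= C -> nonquasianalytic N -> nonquasianalytic (midpoint_weight C N).
Proof.
  intros HC Hnq.
  set (q := fun i => N i / N (S i)).
  assert (Hq : forall i, 0 <= q i) by (intros i; left; apply Rdiv_lt_0_compat; auto).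
  apply (@ex_series_le R_AbsRing R_CompleteNormedModule _ (fun k => q (Nat.div2 k)));
    [|apply ex_series_div2; auto].
  intros k; set (a := Nat.div2 k); set (b := Nat.div2 (S k)).
  assert (Hak : (a <= k)%nat) by (pose proof (div2_spec k); unfold a; lia).
  assert (Hk : 0 < INR (S k)) by (apply lt_0_INR; lia).
  assert (Ha : INR (S a) <= INR (S k)) by (apply le_INR; lia).
  assert (Hratio : midpoint_weight C N k / midpoint_weight C N (S k)
                   = q a * (INR (S a) / (C * INR (S k)))).
  { unfold midpoint_weight, fact_normalized, q; fold a b.
    change (Nat.div2 (S (S k))) with (S a).
    rewrite (fact_simpl k), (fact_simpl a), !mult_INR, <- tech_pow_Rmult.
    pose proof (INR_fact_lt_0 k); pose proof (INR_fact_lt_0 a); pose proof (INR_fact_lt_0 b).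
    pose proof (N_pos a); pose proof (N_pos b); pose proof (N_pos (S a)).
    pose proof (pow_lt C k C_pos); assert (0 < INR (S a)) by (apply lt_0_INR; lia).
    field; repeat split; lra. }
  assert (Hfrac : 0 <= INR (S a) / (C * INR (S k)) <= 1).
  { split; [apply Rdiv_le_0_compat; [apply pos_INR | nra]|].
    apply Rle_div_l; nra. }
  change (norm ?x) with (Rabs x); rewrite Hratio, Rabs_pos_eq; pose proof (Hq a); nra.
Qed.

Lemma midpoint_weight_le_pow2 : log_convex n ->
  forall j k, midpoint_weight C N (j + k) <= (2 * C) ^ (j + k) * (N j * N k).
Proof.
  intros Hlc.
  assert (Hle : forall j k, (j <= k)%nat ->
            midpoint_weight C N (j + k) <= (2 * C) ^ (j + k) * (N j * N k)).
  { intros j k Hjk; set (m := (j + k)%nat).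
    set (a := Nat.div2 m); set (b := Nat.div2 (S m)).
    assert (Hpinch : n a * n b <= n j * n k).
    { apply log_convex_pinch; [exact fact_normalized_pos | exact Hlc | ..];
        pose proof (div2_spec m); pose proof (div2_spec (S m)); unfold a, b, m in *; lia. }
    pose proof (fact_add_le_pow2 j k) as Hfact; fold m in Hfact; apply le_INR in Hfact.
    rewrite !mult_INR, pow_INR in Hfact; change (INR 2) with 2 in Hfact.
    replace (N j * N k) with (INR (fact j) * INR (fact k) * (n j * n k))
      by (unfold n, fact_normalized; pose proof (INR_fact_lt_0 j); pose proof (INR_fact_lt_0 k);
          field; lra).
    unfold midpoint_weight; fold n a b.
    pose proof (pow_lt C m C_pos); pose proof (fact_normalized_pos a); pose proof (fact_normalized_pos b).
    rewrite Rpow_mult_distr.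
    replace (2 ^ m * C ^ m * (INR (fact j) * INR (fact k) * (n j * n k)))
      with (2 ^ m * (INR (fact j) * INR (fact k)) * (C ^ m * (n j * n k))) by ring.
    apply Rmult_le_compat; [apply pos_INR | left; apply Rmult_lt_0_compat; auto; nra | exact Hfact |].
    apply Rmult_le_compat_l; [lra | exact Hpinch]. }
  intros j k; destruct (Nat.le_ge_cases j k) as [Hjk | Hkj]; [auto|].
  rewrite Nat.add_comm, (Rmult_comm (N j)); auto.
Qed.

End MidpointWeight.

Lemma midpoint_weight_in_LM M N C : weight_seq M -> 1 <= C ->
  (forall j k, M (j + k)%nat <= C ^ (j + k) * M j * M k) ->
  in_LM M N -> in_LM M (midpoint_weight C N).
Proof.
  intros HwM HC Hmg [HwN [Hnq [HMN Hlc]]].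
  pose proof (weight_seq_pos N HwN) as HN.
  assert (HC0 : 0 < C) by lra.
  assert (Habove : forall k, M k <= midpoint_weight C N k).
  { apply midpoint_weight_above; auto.
    intros k; left; apply (weight_seq_pos M HwM). }
  assert (Hlc' : log_convex (fact_normalized (midpoint_weight C N)))
    by (apply midpoint_weight_log_convex; auto).
  split; [|split; [|split]].
  - apply (weight_seq_of_log_convex M); auto.
    + apply midpoint_weight_0, weight_seq_0; auto.
    + apply log_convex_of_fact_normalized; exact Hlc'.
  - apply midpoint_weight_nonquasianalytic; auto.
  - exact Habove.
  - exact Hlc'.
Qed.

Lemma moderate_growth_ge1 M : weight_seq M -> moderate_growth M ->
  exists C, 1 <= C /\ forall j k, M (j + k)%nat <= C ^ (j + k) * M j * M k.
Proof.
  intros HwM [C [HC Hmg]]; exists (Rmax C 1); split; [apply Rmax_r|].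
  intros j k; eapply Rle_trans; [apply Hmg|].
  pose proof (weight_seq_pos M HwM j); pose proof (weight_seq_pos M HwM k).
  rewrite !Rmult_assoc; apply Rmult_le_compat_r; [nra|].
  apply pow_incr; split; [lra | apply Rmax_l].
Qed.

Theorem lemma6p3 (M : nat -> R) :
  weight_seq M -> quasianalytic M -> intersectable M ->
  (forall N, in_LM M N ->
     is_lim_seq (fun k => Rpower (N k / INR (Factorial.fact k)) (/ INR k)) p_infty) /\
  (moderate_growth M ->
     forall N, in_LM M N ->
       exists N', in_LM M N' /\ Rbar_lt (mg N' N) p_infty).
Proof.
  intros HwM _ _; split.
  - intros N [HwN [Hnq _]]; exact (nonquasianalytic_root_lim N HwN Hnq).
  - intros Hmg N HN.
    destruct (moderate_growth_ge1 M HwM Hmg) as [C [HC HMC]].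
    exists (midpoint_weight C N); split; [exact (midpoint_weight_in_LM M N C HwM HC HMC HN)|].
    destruct HN as [HwN [_ [_ Hlc]]].
    pose proof (weight_seq_pos N HwN) as HN.
    apply Rbar_le_lt_trans with (2 * C); [|exact I].
    apply mg_le_of_bound; [apply midpoint_weight_pos; auto; lra | exact HN | lra |].
    apply midpoint_weight_le_pow2; auto; lra.
Qed.
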